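(* Let $X$ be the vertex set of a dual polar graph of diameter $d$ with distance $\partial$ and base vertex $u_0\in X$. Let $x,y\in X$, $U=x\cap y$, $\ell=\dim(u_0\cap U)$, and $X'=\{z\in X: U\subseteq z\}$. If $z\in X'$ satisfies $f_x(z)=f_y(z)=1$, then $\partial(u_0,z)=d-\ell$.
   Context: Let $V$ be a finite-dimensional vector space over a finite field with a non-degenerate alternating, Hermitian, or quadratic form of Witt index $d$; $X$ is the set of maximal totally isotropic subspaces (dimension $d$), adjacent iff their intersection has dimension $d-1$, with distance $\partial(x,y)=d-\dim(x\cap y)$. For $z\in X$, $f_z:X\to\mathbb{R}$ is defined by $f_z(w)=1$ if $\partial(u_0,z)+\partial(z,w)=\partial(u_0,w)$ and $f_z(w)=0$ otherwise. *)

From HB Require Import structures.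
From mathcomp Require Import all_boot all_order all_algebra all_field.
Set Implicit Arguments. Unset Strict Implicit. Unset Printing Implicit Defensive.
Import Order.TTheory GRing.Theory Num.Theory.
Local Open Scope ring_scope.

(* The ambient space V = 'rV[F]_n over a finite field F.  A subspace of V is
   represented by a square matrix 'M[F]_n whose row space is the subspace
   (mxalgebra); intersection is (_ :&: _)%MS and dimension is \rank. *)

(* The three kinds of forms:
   - AltForm B        : alternating bilinear form  (u,v) |-> u B v^T
   - HermForm s H     : Hermitian (sigma-sesquilinear) form (u,v) |-> u H (v^s)^T
   - QuadForm A       : quadratic form  Q(u) = u A u^T
                        (associated bilinear form (u,v) |-> u (A + A^T) v^T). *)
Inductive polar_form (F : finFieldType) (n : nat) :=
| AltForm of 'M[F]_n
| HermForm of {rmorphism F -> F} & 'M[F]_n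
| QuadForm of 'M[F]_n.

Definition bil (F : finFieldType) (n : nat) (M : 'M[F]_n) (u v : 'rV[F]_n) : F :=
  (u *m M *m v^T) ord0 ord0.

Definition sesq (F : finFieldType) (n : nat) (s : {rmorphism F -> F})
  (H : 'M[F]_n) (u v : 'rV[F]_n) : F :=
  (u *m H *m (map_mx s v)^T) ord0 ord0.

Definition polar_nondegenerate (F : finFieldType) (n : nat) (f : polar_form F n) : Prop :=
  match f with
  | AltForm B =>
      B^T = - B /\ (forall u, bil B u u = 0) /\ B \in unitmx
  | HermForm s H =>
      (forall a, s (s a) = a) /\ (exists a, s a != a) /\
      H^T = map_mx s H /\ H \in unitmx
  | QuadForm A =>
      (* the singular radical is trivial *)
      forall v : 'rV[F]_n, bil A v v = 0 -> v *m (A + A^T) = 0 -> v = 0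
  end.

Definition totally_isotropic (F : finFieldType) (n : nat) (f : polar_form F n)
  (U : 'M[F]_n) : Prop :=
  forall u v : 'rV[F]_n, (u <= U)%MS -> (v <= U)%MS ->
  match f with
  | AltForm B => bil B u v = 0
  | HermForm s H => sesq s H u v = 0
  | QuadForm A => bil A u u = 0
  end.

Definition witt_index (F : finFieldType) (n : nat) (f : polar_form F n) (d : nat) : Prop :=
  (exists U : 'M[F]_n, totally_isotropic f U /\ \rank U = d) /\
  (forall U : 'M[F]_n, totally_isotropic f U -> (\rank U <= d)%N).

(* Vertices of the dual polar graph: maximal totally isotropic subspaces,
   i.e. totally isotropic subspaces of dimension d. *)
Definition dp_vertex (F : finFieldType) (n : nat) (f : polar_form F n) (d : nat)
  (x : 'M[F]_n) : Prop :=
  totally_isotropic f x /\ \rank x = d.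

Definition dp_dist (F : finFieldType) (n : nat) (d : nat) (x y : 'M[F]_n) : nat :=
  (d - \rank (x :&: y)%MS)%N.

Definition fz (F : finFieldType) (n : nat) (d : nat) (u0 z w : 'M[F]_n) : nat :=
  if (dp_dist d u0 z + dp_dist d z w == dp_dist d u0 w)%N then 1%N else 0%N.

From HB Require Import structures.
From mathcomp Require Import all_boot all_order all_algebra all_field.
From mathcomp Require Import zify.

(* If [x] lies on a geodesic from [u] to [z], then the geodesic condition
   forces rank (u :&: x) + rank (x :&: z) = d + rank (u :&: z), while
   (u :&: x) + (x :&: z) sits inside [x], of rank at most d.  Hence the
   intersection (u :&: x) :&: (x :&: z) has rank at least rank (u :&: z), so it
   is all of u :&: z, and u :&: z <= x.  Applying this to [x] and [y] gives
   u0 :&: z <= x :&: y, and since x :&: y <= z, u0 :&: z = u0 :&: (x :&: y). *)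

Lemma dp_dist_geodesic_capmx_sub {F : finFieldType} {n d : nat} {u x z : 'M[F]_n} :
  (\rank x <= d)%N -> (\rank z <= d)%N ->
  (dp_dist d u x + dp_dist d x z)%N = dp_dist d u z ->
  (u :&: z <= x)%MS.
Proof.
rewrite /dp_dist => rx rz.
set A := (u :&: x)%MS; set B := (x :&: z)%MS => geodesic.
have capAB_sub : (A :&: B <= u :&: z)%MS by rewrite capmxS ?capmxSl ?capmxSr.
have rA : (\rank A <= \rank x)%N by rewrite mxrankS ?capmxSr.
have rB : (\rank B <= \rank x)%N by rewrite mxrankS ?capmxSl.
have rAB : (\rank (A + B)%MS <= \rank x)%N by rewrite mxrankS ?addsmx_sub ?capmxSr ?capmxSl.
have ruz : (\rank (u :&: z)%MS <= \rank z)%N by rewrite mxrankS ?capmxSr.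
have sum_cap := mxrank_sum_cap A B.
have uz_sub_capAB : (u :&: z <= A :&: B)%MS.
  rewrite -(mxrank_leqif_sup capAB_sub).2 eqn_leq (mxrank_leqif_sup capAB_sub).1.
  by lia.
by rewrite (submx_trans uz_sub_capAB) // (submx_trans (capmxSr _ _)) ?capmxSl.
Qed.

Theorem lemmaA3 (F : finFieldType) (n d : nat) (f : polar_form F n)
  (u0 x y z : 'M[F]_n) :
  polar_nondegenerate f -> witt_index f d ->
  dp_vertex f d u0 -> dp_vertex f d x -> dp_vertex f d y -> dp_vertex f d z ->
  (x :&: y <= z)%MS ->
  fz d u0 x z = 1%N -> fz d u0 y z = 1%N ->
  dp_dist d u0 z = (d - \rank (u0 :&: (x :&: y)))%N.
Proof.
move=> _ _ _ [_ rx] [_ ry] [_ rz] xy_sub_z.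
rewrite /fz; case: eqP => // geod_x _; case: eqP => // geod_y _.
have u0z_sub_x := dp_dist_geodesic_capmx_sub (eq_leq rx) (eq_leq rz) geod_x.
have u0z_sub_y := dp_dist_geodesic_capmx_sub (eq_leq ry) (eq_leq rz) geod_y.
rewrite /dp_dist; congr (_ - _)%N; apply/eqmx_rank/andP; split.
  by rewrite sub_capmx capmxSl sub_capmx u0z_sub_x u0z_sub_y.
by rewrite sub_capmx capmxSl (submx_trans (capmxSr _ _)).
Qed.
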